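(* Let $K\subset\mathbb C$ be a number field, let $\pi\in K$ be a non-square, let $L=K(\sqrt\pi)$, and let $\sigma$ be the non-trivial automorphism of $L/K$. Let $\mathfrak b$ be a nonzero ideal of $\mathcal O_K$ such that $\mathfrak b\mathcal O_L=\beta\mathcal O_L$ for some $\beta\in L$. (1) If $\beta^{\sigma-1}=-1$, then $\pi\mathcal O_K$ is the square of a (fractional) ideal of $K$. (2) If $\beta^{\sigma-1}=\zeta$, where $\zeta$ is a primitive $2^m$th root of unity with $m\ge 2$, then $\pi_m\mathcal O_K$ is the square of a (fractional) ideal of $K$.
   Context: $\mathcal O_F$ denotes the ring of integers of a number field $F$, and $\beta^{\sigma-1}$ means $\sigma(\beta)/\beta$. For $n\ge2$, $\pi_n=2+\zeta_{2^n}+\zeta_{2^n}^{-1}$ with $\zeta_{2^n}=e^{2\pi i/2^n}$. *)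

From mathcomp Require Import all_boot all_order all_algebra all_field.
Set Implicit Arguments. Unset Strict Implicit. Unset Printing Implicit Defensive.
Import Order.TTheory GRing.Theory Num.Theory.
Local Open Scope ring_scope.

Definition is_numfield (K : algC -> Prop) : Prop :=
  [/\ K 0 /\ K 1,
      (forall x y, K x -> K y -> K (x - y)),
      (forall x y, K x -> K y -> K (x * y)),
      (forall x, K x -> K x^-1) &
      exists s : seq algC, forall x, K x ->
        exists c : seq algC, all (fun q => q \in Crat) c /\
          x = \sum_(i < size s) c`_i * s`_i].

Definition ring_of_integers (F : algC -> Prop) : algC -> Prop :=
  fun x => F x /\ x \in Aint.

Definition quad_ext (F : algC -> Prop) (r : algC) : algC -> Prop :=
  fun x => exists a b, [/\ F a, F b & x = a + b * r].

(* The graph of the nontrivial automorphism sigma of F(r)/F (r not in F):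
   quad_conj F r x y  <->  y = sigma x. *)
Definition quad_conj (F : algC -> Prop) (r : algC) (x y : algC) : Prop :=
  exists a b, [/\ F a, F b, x = a + b * r & y = a - b * r].

Definition seteq (A B : algC -> Prop) : Prop := forall x, A x <-> B x.

Definition ideal_mul (A B : algC -> Prop) : algC -> Prop :=
  fun x => exists s : seq (algC * algC),
    (forall p, p \in s -> A p.1 /\ B p.2) /\ x = \sum_(p <- s) p.1 * p.2.

Definition principal (O : algC -> Prop) (c : algC) : algC -> Prop :=
  fun x => exists y, O y /\ x = c * y.

Definition is_nonzero_ideal (F : algC -> Prop) (I : algC -> Prop) : Prop :=
  [/\ (forall x, I x -> ring_of_integers F x), I 0,
      (forall x y, I x -> I y -> I (x - y)),
      (forall r x, ring_of_integers F r -> I x -> I (r * x)) &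
      exists x, I x /\ x != 0].

Definition is_fractional_ideal (F : algC -> Prop) (A : algC -> Prop) : Prop :=
  [/\ (forall x, A x -> F x) /\ A 0,
      (forall x y, A x -> A y -> A (x - y)),
      (forall r x, ring_of_integers F r -> A x -> A (r * x)),
      (exists x, A x /\ x != 0) &
      exists d, [/\ ring_of_integers F d, d != 0 &
                    forall x, A x -> ring_of_integers F (d * x)]].

(* In algC, (k.-root z) is the k-th root of z
   with nonnegative imaginary part and maximal real part, so
   (2^(n-1)).-root (-1) = e^{i pi / 2^(n-1)} = e^{2 pi i / 2^n}  (n >= 1). *)
Definition zeta2 (n : nat) : algC := (2 ^ n.-1)%N.-root (-1).

Definition pi_n (n : nat) : algC := 2 + zeta2 n + (zeta2 n)^-1.

From mathcomp Require Import all_boot all_order all_algebra all_field.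
From mathcomp Require Import ring.
Set Implicit Arguments.
Unset Strict Implicit.
Unset Printing Implicit Defensive.
Import GRing.Theory Num.Theory.
Local Open Scope ring_scope.

(* Since b O_L = beta O_L, every element of b O_L has its norm in b^2 (the cross
   terms are traces, which lie in b), so N(beta) lies in b^2.  Conversely, when
   beta / sigma(beta) is integral, y z / N(beta) = (y / beta) (z / beta) (beta / sigma(beta))
   is integral for y, z in b.  Hence b^2 = N(beta) O_K, and c O_K is the square of t b
   whenever c = u t^2 N(beta) with t in K^* and u a unit of O_K.
   In (1), sigma(beta) = -beta forces beta = s sqrt(pi) with s in K, so pi = -s^-2 N(beta).
   In (2), N(beta) = zeta beta^2 and Tr(beta) = (1 + zeta) beta; with xi = zeta_{2^m} and
   t = Tr(beta) / N(beta) we get pi_m = (1 + xi)^2 / xi = u t^2 N(beta) for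
   u = ((1 + xi) / (1 + zeta))^2 zeta / xi.  This u is a unit because zeta and xi are
   odd powers of each other, and it lies in K because pi_m is a polynomial in
   zeta + zeta^-1 = Tr(beta)^2 / N(beta) - 2. *)

Lemma int_multiple_denq (p : {poly rat}) :
  exists2 D : int, 0 < D & forall i, p`_i * D%:~R \is a Num.int.
Proof.
exists (\prod_(i < size p) denq p`_i).
  by apply: prodr_gt0 => i _; apply: denq_gt0.
move=> i; case: (ltnP i (size p)) => Hi; last by rewrite nth_default // mul0r.
rewrite (bigD1 (Ordinal Hi)) //= rmorphM /= mulrA -numqE.
by rewrite rpredM ?rpred_int.
Qed.

(* If p is the minimal polynomial of x and D clears its denominators, then
   D x is a root of the monic integral polynomial sum_i p_i D^(d-i) X^i. *)
Lemma Aint_nat_multiple (x : algC) : exists2 n : nat, (0 < n)%N & n%:R * x \in Aint.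
Proof.
have [p [Dp mon_p] _] := minCpolyP x.
have [D D_gt0 pD_int] := int_multiple_denq p.
have [n Dn] : exists n : nat, D = n by exists `|D|%N; rewrite gtz0_abs.
exists n; first by move: D_gt0; rewrite Dn ltz_nat.
have -> : (n%:R : algC) = D%:~R by rewrite Dn.
pose d := (size p).-1.
have sp : size p = d.+1 by rewrite /d prednK // lt0n size_poly_eq0 monic_neq0.
have lead_p : p`_d = 1 by have /monicP := mon_p; rewrite lead_coefE sp.
pose E i := ratr (p`_i * D%:~R ^+ (d - i)) : algC.
have Ed : E d = 1 by rewrite /E subnn expr0 mulr1 lead_p rmorph1.
apply: (@root_monic_Aint (\poly_(i < size p) E i)).
- rewrite /root horner_poly.
  have /eqP := root_minCpoly x; rewrite Dp horner_coef size_map_poly => px0.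
  apply/eqP; transitivity (D%:~R ^+ d * \sum_(i < size p) (map_poly ratr p)`_i * x ^+ i);
    last by rewrite px0 mulr0.
  rewrite mulr_sumr; apply: eq_bigr => i _; rewrite /E coef_map /= rmorphM rmorphXn /= ratr_int.
  rewrite exprMn mulrA -[ratr _ * _ * _]mulrA -exprD subnK; last first.
    by have := ltn_ord i; rewrite {2}sp ltnS.
  by rewrite mulrCA mulrA.
- have sz : size (\poly_(i < size p) E i) = size p.
    by rewrite size_poly_eq // sp /= Ed oner_neq0.
  by rewrite monicE lead_coefE sz coef_poly sp ltnSn /= Ed.
- apply/polyOverP => i; rewrite coef_poly; case: ifP => Hi; last exact: rpred0.
  case: (ltnP i d) => Hid; last first.
    have -> : i = d by apply/eqP; rewrite eqn_leq Hid andbT -ltnS -sp.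
    by rewrite Ed rpred1.
  rewrite /E -(subnSK Hid) exprS mulrA.
  have /intrP [k ->] : p`_i * D%:~R * D%:~R ^+ (d - i.+1) \is a Num.int.
    by rewrite rpredM ?rpredX ?rpred_int ?pD_int.
  by rewrite ratr_int rpred_int.
Qed.

Section NumberField.
Variable K : algC -> Prop.
Hypothesis HK : is_numfield K.

Lemma numfield0 : K 0. Proof. by case: HK => [[]]. Qed.
Lemma numfield1 : K 1. Proof. by case: HK => [[]]. Qed.
Lemma numfieldB x y : K x -> K y -> K (x - y). Proof. by case: HK => _ H _ _ _; apply: H. Qed.
Lemma numfieldM x y : K x -> K y -> K (x * y). Proof. by case: HK => _ _ H _ _; apply: H. Qed.
Lemma numfieldV x : K x -> K x^-1. Proof. by case: HK => _ _ _ H _; apply: H. Qed.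

Lemma numfieldN x : K x -> K (- x).
Proof. by move=> Kx; rewrite -sub0r; apply: numfieldB Kx; apply: numfield0. Qed.

Lemma numfieldD x y : K x -> K y -> K (x + y).
Proof. by move=> Kx Ky; rewrite -[y]opprK; apply: numfieldB (numfieldN Ky). Qed.

Lemma numfield_div x y : K x -> K y -> K (x / y).
Proof. by move=> Kx Ky; apply: numfieldM Kx (numfieldV Ky). Qed.

Lemma numfieldX x n : K x -> K (x ^+ n).
Proof.
move=> Kx; elim: n => [|n IHn]; first by rewrite expr0; apply: numfield1.
by rewrite exprS; apply: numfieldM.
Qed.

Lemma numfield_nat n : K n%:R.
Proof.
elim: n => [|n IHn]; first exact: numfield0.
by rewrite -addn1 natrD; apply: numfieldD IHn numfield1.
Qed.

Lemma numfield_int x : x \in Num.int -> K x.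
Proof.
move/intrP => [[n|n] ->]; first exact: numfield_nat.
by rewrite NegzE mulrNz; apply: numfieldN; apply: numfield_nat.
Qed.

Lemma numfield_power_sum z w n : z * w = 1 -> K (z + w) -> K (z ^+ n + w ^+ n).
Proof.
move=> zw1 Kzw.
suff [] : K (z ^+ n + w ^+ n) /\ K (z ^+ n.+1 + w ^+ n.+1) by [].
elim: n => [|n [IHn IHn1]].
  by rewrite !expr0 !expr1; split=> //; apply: numfieldD numfield1 numfield1.
split=> //.
have -> : z ^+ n.+2 + w ^+ n.+2 =
    (z + w) * (z ^+ n.+1 + w ^+ n.+1) - (z * w) * (z ^+ n + w ^+ n).
  by rewrite !exprS; ring.
by rewrite zw1 mul1r; apply: numfieldB => //; apply: numfieldM.
Qed.

End NumberField.

Section QuadraticConjugation.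
Variables (K : algC -> Prop) (r : algC).
Hypotheses (HK : is_numfield K) (Kr2 : K (r ^+ 2)) (r_notin_K : ~ K r).
Local Notation conj := (quad_conj K r).
Local Notation L := (quad_ext K r).

Lemma quad_conj_base c : K c -> conj c c.
Proof.
move=> Kc; exists c, 0; rewrite mul0r addr0 subr0.
by split=> //; apply: (numfield0 HK).
Qed.

Lemma quad_conj_ext x y : conj x y -> L x.
Proof. by case=> a [b] [Ka Kb -> _]; exists a, b. Qed.

Lemma quad_ext_conj x : L x -> exists y, conj x y.
Proof. by case=> a [b] [Ka Kb ->]; exists (a - b * r), a, b. Qed.

Lemma quad_conj_sym x y : conj x y -> conj y x.
Proof.
case=> a [b] [Ka Kb -> ->]; exists a, (- b).
by rewrite mulNr opprK; split=> //; apply: (numfieldN HK).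
Qed.

Lemma quad_conjD x x' y y' : conj x x' -> conj y y' -> conj (x + y) (x' + y').
Proof.
case=> a [b] [Ka Kb -> ->]; case=> c [d] [Kc Kd -> ->].
by exists (a + c), (b + d); split; [exact: (numfieldD HK) | exact: (numfieldD HK) | ring | ring].
Qed.

Lemma quad_conjM x x' y y' : conj x x' -> conj y y' -> conj (x * y) (x' * y').
Proof.
case=> a [b] [Ka Kb -> ->]; case=> c [d] [Kc Kd -> ->].
exists (a * c + b * d * r ^+ 2), (a * d + b * c); split; try ring.
- by apply: (numfieldD HK); apply: (numfieldM HK) => //; apply: (numfieldM HK).
- by apply: (numfieldD HK); apply: (numfieldM HK).
Qed.

Lemma quad_conjX x y n : conj x y -> conj (x ^+ n) (y ^+ n).
Proof.
move=> Cxy; elim: n => [|n IHn].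
  by rewrite !expr0; apply: quad_conj_base; apply: (numfield1 HK).
by rewrite !exprS; apply: quad_conjM.
Qed.

Lemma quad_conj_sum (I : Type) (s : seq I) (P : pred I) (F G : I -> algC) :
  (forall i, P i -> conj (F i) (G i)) ->
  conj (\sum_(i <- s | P i) F i) (\sum_(i <- s | P i) G i).
Proof.
move=> CFG; elim: s => [|i s IHs].
  by rewrite !big_nil; apply: quad_conj_base; apply: (numfield0 HK).
by rewrite !big_cons; case: ifP => Pi //; apply: quad_conjD (CFG _ Pi) IHs.
Qed.

Lemma quad_conj_trace x y : conj x y -> K (x + y).
Proof.
case=> a [b] [Ka Kb -> ->].
have -> : a + b * r + (a - b * r) = a + a by ring.
by apply: (numfieldD HK).
Qed.

Lemma quad_conj_norm x y : conj x y -> K (x * y).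
Proof.
case=> a [b] [Ka Kb -> ->].
have -> : (a + b * r) * (a - b * r) = a * a - b * b * r ^+ 2 by ring.
by apply: (numfieldB HK); apply: (numfieldM HK) => //; apply: (numfieldM HK).
Qed.

(* Since r is not in K, the coordinates (a, b) of x = a + b r are unique. *)
Lemma quad_conj_fun x y z : conj x y -> conj x z -> y = z.
Proof.
case=> a [b] [Ka Kb -> ->]; case=> c [d] [Kc Kd Eac ->].
have [bd|nbd] := eqVneq b d; first by rewrite -bd in Eac *; rewrite (addIr _ Eac).
exfalso; apply: r_notin_K.
have -> : r = (c - a) / (b - d).
  apply: (mulIf (_ : b - d != 0)); first by rewrite subr_eq0.
  by rewrite divfK ?subr_eq0 // [c](canRL (addrK (d * r)) (esym Eac)); ring.
by apply: (numfield_div HK); apply: (numfieldB HK).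
Qed.

Lemma quad_conj0 y : conj 0 y -> y = 0.
Proof. by move/quad_conj_fun; apply; apply: quad_conj_base; apply: (numfield0 HK). Qed.

(* sigma fixes the integer coefficients of the minimal polynomial of x. *)
Lemma quad_conj_Aint x y : conj x y -> x \in Aint -> y \in Aint.
Proof.
move=> Cxy Ax; apply: (@root_monic_Aint (minCpoly x)) => //; last exact: minCpoly_monic.
have : conj (minCpoly x).[x] (minCpoly x).[y].
  rewrite !horner_coef; apply: quad_conj_sum => i _; apply: quad_conjM; last exact: quad_conjX.
  by apply: quad_conj_base; apply: (numfield_int HK) => //; apply: polyOverP.
by rewrite (eqP (root_minCpoly x)) => /quad_conj0 y0; rewrite /root y0.
Qed.

Lemma quad_ext_base x : K x -> L x.
Proof. by move/quad_conj_base/quad_conj_ext. Qed.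

Lemma quad_extD x y : L x -> L y -> L (x + y).
Proof.
by move=> /quad_ext_conj [x' Cx] /quad_ext_conj [y' Cy]; apply: quad_conj_ext (quad_conjD Cx Cy).
Qed.

Lemma quad_extM x y : L x -> L y -> L (x * y).
Proof.
by move=> /quad_ext_conj [x' Cx] /quad_ext_conj [y' Cy]; apply: quad_conj_ext (quad_conjM Cx Cy).
Qed.

Local Notation OL := (ring_of_integers L).
Local Notation OK := (ring_of_integers K).

Lemma ints1 : OL 1.
Proof. by split; [apply: quad_ext_base; apply: (numfield1 HK) | apply: rpred1]. Qed.

Lemma intsM x y : OL x -> OL y -> OL (x * y).
Proof. by case=> Lx Ax [Ly Ay]; split; [apply: quad_extM | apply: rpredM]. Qed.

Lemma ints_conj y y' : OL y -> conj y y' -> OL y'.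
Proof.
by case=> Ly Ay Cy; split; [apply: quad_conj_ext (quad_conj_sym Cy) | apply: quad_conj_Aint Cy Ay].
Qed.

Lemma ints_trace y y' : OL y -> conj y y' -> OK (y + y').
Proof.
move=> Oy Cy; split; first exact: quad_conj_trace Cy.
by apply: rpredD; [case: Oy | case: (ints_conj Oy Cy)].
Qed.

Lemma ints_norm y y' : OL y -> conj y y' -> OK (y * y').
Proof.
move=> Oy Cy; split; first exact: quad_conj_norm Cy.
by apply: rpredM; [case: Oy | case: (ints_conj Oy Cy)].
Qed.

End QuadraticConjugation.

Section IdealProduct.
Variables A B : algC -> Prop.

Lemma ideal_mul0 : ideal_mul A B 0.
Proof. by exists [::]; rewrite big_nil. Qed.

Lemma ideal_mulD x y : ideal_mul A B x -> ideal_mul A B y -> ideal_mul A B (x + y).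
Proof.
case=> s [ABs ->] [t [ABt ->]]; exists (s ++ t); split; last by rewrite big_cat.
by move=> p; rewrite mem_cat => /orP [] ?; [apply: ABs | apply: ABt].
Qed.

Lemma ideal_mul_pair x y : A x -> B y -> ideal_mul A B (x * y).
Proof.
move=> Ax By; exists [:: (x, y)]; split; last by rewrite big_seq1.
by move=> p; rewrite inE => /eqP ->.
Qed.

Lemma ideal_mul_ind (P : algC -> Prop) : P 0 ->
    (forall x y z, A x -> B y -> ideal_mul A B z -> P z -> P (x * y + z)) ->
  forall z, ideal_mul A B z -> P z.
Proof.
move=> P0 PS z [s [ABs ->]]; elim: s ABs => [|p s IHs] ABs; first by rewrite big_nil.
have ABs' q : q \in s -> A q.1 /\ B q.2 by move=> sq; apply: ABs; rewrite inE sq orbT.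
have [Ap Bp] := ABs p (mem_head _ _).
by rewrite big_cons; apply: PS (IHs ABs'); last exists s.
Qed.

Lemma ideal_mulMl (R : algC -> Prop) c z :
    (forall c x, R c -> A x -> A (c * x)) -> R c ->
  ideal_mul A B z -> ideal_mul A B (c * z).
Proof.
move=> RA Rc; move: z; apply: ideal_mul_ind => [|x y z Ax By _ IHz].
  by rewrite mulr0; apply: ideal_mul0.
by rewrite mulrDr mulrA; apply: ideal_mulD IHz; apply: ideal_mul_pair By; apply: RA.
Qed.

Lemma ideal_mulMr (R : algC -> Prop) c z :
    (forall c y, R c -> B y -> B (c * y)) -> R c ->
  ideal_mul A B z -> ideal_mul A B (c * z).
Proof.
move=> RB Rc; move: z; apply: ideal_mul_ind => [|x y z Ax By _ IHz].
  by rewrite mulr0; apply: ideal_mul0.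
by rewrite mulrDr mulrCA; apply: ideal_mulD IHz; apply: ideal_mul_pair Ax _; apply: RB.
Qed.

End IdealProduct.

Definition scale_ideal (t : algC) (I : algC -> Prop) : algC -> Prop :=
  fun x => exists2 y, I y & x = t * y.

Lemma ideal_mul_scale (I : algC -> Prop) t x :
  ideal_mul (scale_ideal t I) (scale_ideal t I) x <->
  exists2 z, ideal_mul I I z & x = t ^+ 2 * z.
Proof.
split.
  move: x; apply: ideal_mul_ind => [|_ _ _ [p Ip ->] [q Iq ->] _ [z Iz ->]].
    by exists 0; [apply: ideal_mul0 | rewrite mulr0].
  by exists (p * q + z); [apply: ideal_mulD Iz; apply: ideal_mul_pair | ring].
case=> z + ->; move: z; apply: ideal_mul_ind => [|p q z Ip Iq _ IHz].
  by rewrite mulr0; apply: ideal_mul0.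
have -> : t ^+ 2 * (p * q + z) = (t * p) * (t * q) + t ^+ 2 * z by ring.
by apply: ideal_mulD IHz; apply: ideal_mul_pair; [exists p | exists q].
Qed.

Section NonzeroIdeal.
Variables (K I : algC -> Prop).
Hypothesis HI : is_nonzero_ideal K I.
Local Notation OK := (ring_of_integers K).

Lemma nz_ideal_ints x : I x -> OK x. Proof. by case: HI => H _ _ _ _; apply: H. Qed.
Lemma nz_ideal_sub x : I x -> K x. Proof. by case/nz_ideal_ints. Qed.
Lemma nz_ideal0 : I 0. Proof. by case: HI. Qed.
Lemma nz_idealB x y : I x -> I y -> I (x - y). Proof. by case: HI => _ _ H _ _; apply: H. Qed.
Lemma nz_idealM c x : OK c -> I x -> I (c * x). Proof. by case: HI => _ _ _ H _; apply: H. Qed.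
Lemma nz_ideal_neq0 : exists2 x, I x & x != 0. Proof. by case: HI => _ _ _ _ [x []]; exists x. Qed.

Lemma nz_idealD x y : I x -> I y -> I (x + y).
Proof.
move=> Ix Iy; rewrite -[y]opprK -[- y]sub0r.
by apply: nz_idealB Ix _; apply: nz_idealB Iy; apply: nz_ideal0.
Qed.

(* A common denominator of t clears the denominators of t I, since I lies in O_K. *)
Lemma fractional_scale_ideal t : is_numfield K -> K t -> t != 0 ->
  is_fractional_ideal K (scale_ideal t I).
Proof.
move=> HK Kt t_neq0; split.
- split; first by move=> _ [y Iy ->]; apply: (numfieldM HK) Kt (nz_ideal_sub Iy).
  by exists 0; [apply: nz_ideal0 | rewrite mulr0].
- by move=> _ _ [p Ip ->] [q Iq ->]; exists (p - q); [apply: nz_idealB | rewrite mulrBr].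
- by move=> c _ Oc [p Ip ->]; exists (c * p); [apply: nz_idealM | rewrite mulrCA].
- have [x Ix x_neq0] := nz_ideal_neq0.
  by exists (t * x); split; [exists x | rewrite mulf_neq0].
- have [n n_gt0 Ant] := Aint_nat_multiple t.
  exists n%:R; split; first by split; [apply: (numfield_nat HK) | apply: rpred_nat].
    by rewrite pnatr_eq0 -lt0n.
  move=> _ [y Iy ->]; have [Ky Ay] := nz_ideal_ints Iy; split.
    by apply: (numfieldM HK) (numfield_nat HK n) (numfieldM HK Kt Ky).
  by rewrite mulrA rpredM.
Qed.

End NonzeroIdeal.

Lemma principal_unit_scale_ideal K I N v t : is_numfield K ->
    seteq (ideal_mul I I) (principal (ring_of_integers K) N) ->
    K v -> v \in Aint -> v^-1 \in Aint -> v != 0 ->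
  seteq (principal (ring_of_integers K) (v * t ^+ 2 * N))
        (ideal_mul (scale_ideal t I) (scale_ideal t I)).
Proof.
move=> HK II_N Kv Av Avi v_neq0 x; rewrite ideal_mul_scale; split.
  case=> w [[Kw Aw] ->]; exists (N * (v * w)); last by ring.
  by apply/II_N; exists (v * w); do ?split; [apply: (numfieldM HK) | apply: rpredM].
case=> _ /II_N [w [[Kw Aw] ->]] ->; exists (v^-1 * w); split; last by field.
by split; [apply: (numfieldM HK) (numfieldV HK Kv) Kw | apply: rpredM].
Qed.

Lemma prim_root_neq0 (R : nzRingType) n (z : R) : n.-primitive_root z -> z != 0.
Proof.
move=> prim_z; apply/eqP => z0; have := prim_expr_order prim_z.
by rewrite z0 expr0n (gtn_eqF (prim_order_gt0 prim_z)) => /eqP; rewrite eq_sym oner_eq0.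
Qed.

Lemma Aint_prim_rootV n (z : algC) : n.-primitive_root z -> z^-1 \in Aint.
Proof.
move=> prim_z; apply: (Aint_unity_root (prim_order_gt0 prim_z)).
by rewrite unity_rootE exprVn prim_expr_order // invr1.
Qed.

Lemma prim_root_pow2_half_neq1 m (z : algC) : (0 < m)%N ->
  (2 ^ m).-primitive_root z -> z ^+ (2 ^ m.-1) != 1.
Proof.
by move=> m_gt0 prim_z; rewrite -(prim_order_dvd prim_z) dvdn_Pexp2l // -ltnNge ltn_predL.
Qed.

Lemma prim_root_pow2_odd_exp m (z w : algC) : (0 < m)%N -> (2 ^ m).-primitive_root z ->
  w ^+ (2 ^ m) = 1 -> w ^+ (2 ^ m.-1) != 1 -> exists2 k, odd k & w = z ^+ k.
Proof.
move=> m_gt0 prim_z wn1; have [[k _] /= ->] := prim_rootP prim_z wn1.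
move=> zkh1; exists k => //; apply: contraNT zkh1 => even_k.
have hk : (k * 2 ^ m.-1 = 2 ^ m * k./2)%N.
  by rewrite -{1}(odd_double_half k) (negbTE even_k) add0n -mul2n -(prednK m_gt0) expnS /=; ring.
by rewrite -exprM hk exprM (prim_expr_order prim_z) expr1n.
Qed.

Lemma prim_root_pow2_addr1_neq0 m (z : algC) : (2 <= m)%N ->
  (2 ^ m).-primitive_root z -> 1 + z != 0.
Proof.
move=> m_ge2 prim_z; apply: contraNneq (prim_root_pow2_half_neq1 (ltnW m_ge2) prim_z).
move/eqP; rewrite addrC addr_eq0 => /eqP ->.
by rewrite -signr_odd oddX orbF -subn1 subn_eq0 leqNgt m_ge2.
Qed.

Lemma zeta2_prim_root m : (0 < m)%N -> (2 ^ m).-primitive_root (zeta2 m).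
Proof.
move=> m_gt0; have [z prim_z] := C_prim_root_exists (expn_gt0 2 m).
have xi_half : zeta2 m ^+ (2 ^ m.-1) = -1 by rewrite rootCK ?expn_gt0.
have xi_order : zeta2 m ^+ (2 ^ m) = 1.
  by rewrite -(prednK m_gt0) expnSr exprM prednK // xi_half sqrrN expr1n.
have [|k odd_k ->] := prim_root_pow2_odd_exp m_gt0 prim_z xi_order.
  by rewrite xi_half -subr_eq0 -opprD oppr_eq0 (pnatr_eq0 algC 2).
by rewrite prim_root_exp_coprime // coprimeXr // coprimen2.
Qed.

(* 1 + x^j = (1 + x) (1 - x + x^2 - ... + x^(j-1)) for odd j. *)
Lemma Aint_div_odd_pow j (x : algC) : odd j -> x \in Aint -> 1 + x != 0 ->
  (1 + x ^+ j) / (1 + x) \in Aint.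
Proof.
move=> odd_j Ax x1_neq0.
have -> : 1 + x ^+ j = (1 + x) * \sum_(i < j) (- x) ^+ i.
  have := subrX1 (- x) j; rewrite exprNn -signr_odd odd_j expr1 => geom.
  have -> : 1 + x ^+ j = - (-1 * x ^+ j - 1) by ring.
  by rewrite geom; ring.
by rewrite mulrC mulKf //; apply: rpred_sum => i _; apply: rpredX; rewrite rpredN.
Qed.

(* Two primitive 2^m-th roots of unity are odd powers of each other. *)
Lemma Aint_div_prim_root_pow2 m (z w : algC) : (2 <= m)%N ->
    (2 ^ m).-primitive_root z -> (2 ^ m).-primitive_root w ->
  (1 + w) / (1 + z) \in Aint.
Proof.
move=> m_ge2 prim_z prim_w; have m_gt0 := ltnW m_ge2.
have [k odd_k ->] := prim_root_pow2_odd_exp m_gt0 prim_z (prim_expr_order prim_w)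
  (prim_root_pow2_half_neq1 m_gt0 prim_w).
exact: Aint_div_odd_pow odd_k (Aint_prim_root prim_z) (prim_root_pow2_addr1_neq0 m_ge2 prim_z).
Qed.

Lemma Aint_prim_root_pow2_unit m (z w : algC) : (2 <= m)%N ->
    (2 ^ m).-primitive_root z -> (2 ^ m).-primitive_root w ->
  ((1 + w) / (1 + z)) ^+ 2 * z / w \in Aint.
Proof.
move=> m_ge2 prim_z prim_w; apply: rpredM (Aint_prim_rootV prim_w).
exact: rpredM (rpredX 2 (Aint_div_prim_root_pow2 m_ge2 prim_z prim_w)) (Aint_prim_root prim_z).
Qed.

Lemma pi_nE m : (0 < m)%N -> pi_n m = (1 + zeta2 m) ^+ 2 / zeta2 m.
Proof.
move=> m_gt0; have xi_neq0 := prim_root_neq0 (zeta2_prim_root m_gt0).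
by rewrite /pi_n; field.
Qed.

Lemma numfield_pi_n K m zeta : is_numfield K -> (0 < m)%N ->
  (2 ^ m).-primitive_root zeta -> K (zeta + zeta^-1) -> K (pi_n m).
Proof.
move=> HK m_gt0 prim_z Kz.
have [[j _] /= xiE] := prim_rootP prim_z (prim_expr_order (zeta2_prim_root m_gt0)).
rewrite /pi_n -addrA xiE -exprVn; apply: (numfieldD HK) (numfield_nat HK 2) _.
by apply: (numfield_power_sum HK) Kz; rewrite mulfV // (prim_root_neq0 prim_z).
Qed.

Section ExtendedIdeal.
Variables (K : algC -> Prop) (r : algC) (b : algC -> Prop) (beta : algC).
Hypotheses (HK : is_numfield K) (Kr2 : K (r ^+ 2)) (r_notin_K : ~ K r).
Hypothesis Hb : is_nonzero_ideal K b.
Local Notation conj := (quad_conj K r).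
Local Notation L := (quad_ext K r).
Local Notation OL := (ring_of_integers L).
Local Notation OK := (ring_of_integers K).
Local Notation bOL := (ideal_mul b OL).
Hypothesis bOL_beta : seteq bOL (principal OL beta).

Lemma ext_ideal_sub z : bOL z -> L z.
Proof.
move: z; apply: ideal_mul_ind => [|x y z bx [Ly _] _ Lz].
  exact: (quad_ext_base r HK (numfield0 HK)).
exact: (quad_extD HK (quad_extM HK Kr2 (quad_ext_base r HK (nz_ideal_sub Hb bx)) Ly) Lz).
Qed.

Lemma ext_ideal_conj_ind (P : algC -> algC -> Prop) : P 0 0 ->
    (forall x y y' z z', b x -> OL y -> conj y y' -> bOL z -> conj z z' -> P z z' ->
       P (x * y + z) (x * y' + z')) ->
  forall z z', bOL z -> conj z z' -> P z z'.
Proof.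
move=> P0 PS z z' bOLz; move: z bOLz z'.
apply: (@ideal_mul_ind b OL (fun z => forall z', conj z z' -> P z z')).
  by move=> z' /(quad_conj0 HK r_notin_K) ->.
move=> x y z bx Oy bOLz IHz z' Cz'.
have [y' Cy] := quad_ext_conj (proj1 Oy).
have [z'' Cz] := quad_ext_conj (ext_ideal_sub bOLz).
have Cx := quad_conj_base r HK (nz_ideal_sub Hb bx).
rewrite (quad_conj_fun HK r_notin_K Cz' (quad_conjD HK (quad_conjM HK Kr2 Cx Cy) Cz)).
exact: PS (IHz _ Cz).
Qed.

Lemma ext_ideal_conj z z' : bOL z -> conj z z' -> bOL z'.
Proof.
move: z z'; apply: ext_ideal_conj_ind => [|x y y' z z' bx Oy Cy _ _ bOLz']; first exact: ideal_mul0.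
by apply: ideal_mulD bOLz'; apply: ideal_mul_pair bx (ints_conj HK Kr2 r_notin_K Oy Cy).
Qed.

Lemma ext_ideal_trace z z' : bOL z -> conj z z' -> b (z + z').
Proof.
move: z z'; apply: ext_ideal_conj_ind => [|x y y' z z' bx Oy Cy _ _ bzz'].
  by rewrite addr0; apply: (nz_ideal0 Hb).
have -> : x * y + z + (x * y' + z') = (y + y') * x + (z + z') by ring.
exact: (nz_idealD Hb (nz_idealM Hb (ints_trace HK Kr2 r_notin_K Oy Cy) bx) bzz').
Qed.

(* The cross term y z' + y' z is the trace of y z', an element of b O_L. *)
Lemma ext_ideal_norm z z' : bOL z -> conj z z' -> ideal_mul b b (z * z').
Proof.
move: z z'; apply: ext_ideal_conj_ind => [|x y y' z z' bx Oy Cy bOLz Cz IHz].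
  by rewrite mul0r; apply: ideal_mul0.
have -> : (x * y + z) * (x * y' + z') =
    x * (y * y' * x) + (x * (y * z' + y' * z) + z * z') by ring.
apply: ideal_mulD.
  exact: (ideal_mul_pair bx (nz_idealM Hb (ints_norm HK Kr2 r_notin_K Oy Cy) bx)).
apply: (ideal_mulD _ IHz); apply: (ideal_mul_pair bx); apply: ext_ideal_trace.
  exact: (ideal_mulMr (intsM HK Kr2) Oy (ext_ideal_conj bOLz Cz)).
exact: (quad_conjM HK Kr2 Cy (quad_conj_sym HK Cz)).
Qed.

Lemma ext_ideal_div_generator y : b y -> exists s, OL s /\ y = beta * s.
Proof.
by move=> by_; apply/bOL_beta; rewrite -[y]mulr1; apply: ideal_mul_pair by_ (ints1 r HK).
Qed.

Lemma ext_ideal_generator : bOL beta.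
Proof. by apply/bOL_beta; exists 1; split; [apply: ints1 r HK | rewrite mulr1]. Qed.

Lemma ext_ideal_generator_neq0 : beta != 0.
Proof.
have [x bx x_neq0] := nz_ideal_neq0 Hb; have [s [_ xE]] := ext_ideal_div_generator bx.
by apply: contraNneq x_neq0 => beta0; rewrite xE beta0 mul0r.
Qed.

Lemma ideal_sqr_norm beta' : conj beta beta' -> beta / beta' \in Aint ->
  seteq (ideal_mul b b) (principal OK (beta * beta')).
Proof.
move=> Cb Abb'; have beta_neq0 := ext_ideal_generator_neq0.
have beta'_neq0 : beta' != 0.
  apply: (contraNneq _ beta_neq0) => b'0.
  by move: Cb; rewrite b'0 => /(quad_conj_sym HK) /(quad_conj0 HK r_notin_K) ->.
move=> x; split; last first.
  case=> w [Ow ->]; rewrite mulrC.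
  exact: (ideal_mulMl (nz_idealM Hb) Ow (ext_ideal_norm ext_ideal_generator Cb)).
move: x; apply: ideal_mul_ind => [|x y z bx by_ _ [w [[Kw Aw] ->]]].
  by exists 0; split; [split; [apply: (numfield0 HK) | apply: rpred0] | rewrite mulr0].
have [s [[_ As] xE]] := ext_ideal_div_generator bx.
have [s' [[_ As'] yE]] := ext_ideal_div_generator by_.
have xyN : x * y / (beta * beta') = s * s' * (beta / beta').
  by rewrite xE yE; field; rewrite beta'_neq0.
exists (x * y / (beta * beta') + w); split; last by field; do ?[apply/andP; split].
split; last by rewrite xyN; apply: rpredD => //; apply: rpredM => //; apply: rpredM.
apply: (numfieldD HK) Kw; apply: (numfield_div HK) (quad_conj_norm HK Kr2 Cb).
by apply: (numfieldM HK); apply: (nz_ideal_sub Hb).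
Qed.

Lemma norm_square_class beta' t v : conj beta beta' -> beta / beta' \in Aint ->
    K t -> t != 0 -> K v -> v \in Aint -> v^-1 \in Aint -> v != 0 ->
  exists a, is_fractional_ideal K a /\
    seteq (principal OK (v * t ^+ 2 * (beta * beta'))) (ideal_mul a a).
Proof.
move=> Cb Abb' Kt t_neq0 Kv Av Avi v_neq0; exists (scale_ideal t b); split.
  exact: (fractional_scale_ideal Hb HK Kt t_neq0).
exact: (principal_unit_scale_ideal t HK (ideal_sqr_norm Cb Abb') Kv Av Avi v_neq0).
Qed.

Lemma anti_invariant_square_class :
    (forall sbeta, conj beta sbeta -> sbeta / beta = -1) ->
  exists a, is_fractional_ideal K a /\ seteq (principal OK (r ^+ 2)) (ideal_mul a a).
Proof.
move=> sigma_beta; have beta_neq0 := ext_ideal_generator_neq0.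
have [beta' Cb] := quad_ext_conj (ext_ideal_sub ext_ideal_generator).
have beta'E : beta' = - beta by rewrite -mulN1r -(sigma_beta _ Cb) divfK.
have [a0 [b0 [Ka0 Kb0 betaE beta'E']]] := Cb.
have a0_eq0 : a0 = 0.
  have : 2%:R * a0 = beta + beta' by rewrite betaE beta'E'; ring.
  by rewrite beta'E addrN => /eqP; rewrite mulf_eq0 pnatr_eq0 /= => /eqP.
have b0_neq0 : b0 != 0.
  by apply: contraNneq beta_neq0 => b00; rewrite betaE a0_eq0 b00 mul0r addr0.
have -> : r ^+ 2 = -1 * b0^-1 ^+ 2 * (beta * beta').
  by rewrite beta'E betaE a0_eq0 add0r; field.
apply: (norm_square_class Cb).
- by rewrite beta'E invrN mulrN divff // rpredN rpred1.
- exact: (numfieldV HK Kb0).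
- by rewrite invr_eq0.
- exact: (numfieldN HK (numfield1 HK)).
- by rewrite rpredN rpred1.
- by rewrite invrN1 rpredN rpred1.
- by rewrite oppr_eq0 oner_eq0.
Qed.

Lemma root_of_unity_square_class m zeta : (2 <= m)%N -> (2 ^ m).-primitive_root zeta ->
    (forall sbeta, conj beta sbeta -> sbeta / beta = zeta) ->
  exists a, is_fractional_ideal K a /\ seteq (principal OK (pi_n m)) (ideal_mul a a).
Proof.
move=> m_ge2 prim_z sigma_beta; have m_gt0 := ltnW m_ge2.
have prim_xi := zeta2_prim_root m_gt0; rewrite pi_nE //; set xi := zeta2 m in prim_xi *.
have beta_neq0 := ext_ideal_generator_neq0.
have [beta' Cb] := quad_ext_conj (ext_ideal_sub ext_ideal_generator).
have beta'E : beta' = zeta * beta by rewrite -(sigma_beta _ Cb) divfK.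
have z_neq0 := prim_root_neq0 prim_z; have xi_neq0 := prim_root_neq0 prim_xi.
have z1_neq0 := prim_root_pow2_addr1_neq0 m_ge2 prim_z.
have xi1_neq0 := prim_root_pow2_addr1_neq0 m_ge2 prim_xi.
have tr_neq0 : beta + zeta * beta != 0 by rewrite -{1}[beta]mul1r -mulrDl mulf_neq0.
have Ktr := quad_conj_trace HK Cb; have Knorm := quad_conj_norm HK Kr2 Cb.
have Kz : K (zeta + zeta^-1).
  have -> : zeta + zeta^-1 = ((beta + beta') ^+ 2 - 2%:R * (beta * beta')) / (beta * beta').
    by rewrite beta'E; field; do ?[apply/andP; split].
  apply: (numfield_div HK _ Knorm); apply: (numfieldB HK (numfieldX HK 2 Ktr)).
  exact: (numfieldM HK (numfield_nat HK 2) Knorm).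
pose t := (beta + beta') / (beta * beta').
pose v := ((1 + xi) / (1 + zeta)) ^+ 2 * zeta / xi.
have -> : (1 + xi) ^+ 2 / xi = v * t ^+ 2 * (beta * beta').
  by rewrite /v /t beta'E; field; do ?[apply/andP; split].
apply: (norm_square_class Cb).
- rewrite beta'E invfM mulrCA divff // mulr1; exact: (Aint_prim_rootV prim_z).
- exact: (numfield_div HK Ktr Knorm).
- by rewrite /t beta'E !(mulf_neq0, invr_neq0).
- have -> : v = (1 + xi) ^+ 2 / xi * (beta * beta') / (beta + beta') ^+ 2.
    by rewrite /v beta'E; field; do ?[apply/andP; split].
  apply: (numfield_div HK _ (numfieldX HK 2 Ktr)); apply: (numfieldM HK _ Knorm).
  by rewrite -pi_nE //; apply: (numfield_pi_n HK m_gt0 prim_z Kz).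
- exact: (Aint_prim_root_pow2_unit m_ge2 prim_z prim_xi).
- have -> : v^-1 = ((1 + zeta) / (1 + xi)) ^+ 2 * xi / zeta.
    by rewrite /v; field; do ?[apply/andP; split].
  exact: (Aint_prim_root_pow2_unit m_ge2 prim_xi prim_z).
- by rewrite /v !mulf_neq0 ?invr_eq0 ?expf_neq0 ?mulf_neq0 ?invr_eq0.
Qed.

End ExtendedIdeal.

Theorem lemma1 (K : algC -> Prop) (pi sqrtpi : algC)
    (b : algC -> Prop) (beta : algC) :
  is_numfield K ->
  K pi ->
  ~ (exists x, K x /\ x ^+ 2 = pi) ->
  sqrtpi ^+ 2 = pi ->
  is_nonzero_ideal K b ->
  quad_ext K sqrtpi beta ->
  seteq (ideal_mul b (ring_of_integers (quad_ext K sqrtpi)))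
        (principal (ring_of_integers (quad_ext K sqrtpi)) beta) ->
  (* (1) *)
  ((forall sbeta, quad_conj K sqrtpi beta sbeta -> sbeta / beta = -1) ->
     exists a, is_fractional_ideal K a /\
       seteq (principal (ring_of_integers K) pi) (ideal_mul a a))
  /\
  (* (2) *)
  (forall (m : nat) (zeta : algC), (2 <= m)%N ->
     (2 ^ m)%N.-primitive_root zeta ->
     (forall sbeta, quad_conj K sqrtpi beta sbeta -> sbeta / beta = zeta) ->
     exists a, is_fractional_ideal K a /\
       seteq (principal (ring_of_integers K) (pi_n m)) (ideal_mul a a)).
Proof.
move=> HK Kpi pi_nonsquare sqrtpi2 Hb _ bOL_beta.
have sqrtpi_notin_K : ~ K sqrtpi by move=> Ks; apply: pi_nonsquare; exists sqrtpi.
subst pi; split.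
  exact: (anti_invariant_square_class HK Kpi sqrtpi_notin_K Hb bOL_beta).
move=> m zeta m_ge2 prim_z.
exact: (root_of_unity_square_class HK Kpi sqrtpi_notin_K Hb bOL_beta m_ge2 prim_z).
Qed.
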